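(* Let $h\ge 2$ be an integer and let $O$ be a finite set of next hops with $\delta=|O|$ and probability distribution $(p_o)_{o\in O}$, with entropy $H_O=\sum_{o\in O} p_o\log_2\frac{1}{p_o}$. Let $T$ be the complete binary trie of height $h$ whose $2^h$ leaves are labeled independently with next hop $o$ with probability $p_o$, let $D$ be the DAG obtained from $T$ by trie-folding, and let $V^j_D$ be the set of nodes of $D$ at level $j$. For $1\le j\le h$ put $\beta_j=\min\{\frac{H_O}{h-j}2^h+3,\,2^{h-j},\,\delta^{2^j}\}$ (with the first term $+\infty$ for $j=h$), let $k^*\in\{1,\dots,h\}$ be a level at which $\beta_j$ attains its maximum, and suppose each node of $D$ is stored using $2(h-k^* )$ bits. Then the expected number of bits needed to store the nodes of $D$ (at levels $1,\dots,h$), namely $2(h-k^* )\sum_{j=1}^h E(|V^j_D|)$, is at most \[2 h H_O 2^{h} + 6h^2.\]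
   Context: Levels: the level of a node of $T$ is $h$ minus its distance from the root; the root has level $h$, leaves level $0$, and level $j$ has $2^{h-j}$ nodes, each the root of a subtrie of height $j$ with $2^j$ labeled leaves. Trie-folding merges nodes whose rooted subtries are identical (same structure and same leaf next-hop labels), producing a DAG $D$; the nodes of $D$ at level $j$ correspond to the distinct leaf-label strings of length $2^j$ among the $2^{h-j}$ level-$j$ subtries. Each node of $D$ stores two child pointers of $h-k^*$ bits each. *)

From HB Require Import structures.
From mathcomp Require Import all_boot all_order all_algebra.
From mathcomp Require Import all_classical all_reals.
From mathcomp Require Import exp.
Set Implicit Arguments. Unset Strict Implicit. Unset Printing Implicit Defensive.
Import Order.TTheory GRing.Theory Num.Theory.
Local Open Scope ring_scope.

Definition log2 {R : realType} (x : R) : R := ln x / ln 2.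

(* Shannon entropy H_O = sum_o p_o log2 (1/p_o); terms with p_o = 0 vanish
   since 0^-1 = 0 and ln 0 = 0 in MathComp(-Analysis). *)
Definition entropy {R : realType} {O : finType} (p : O -> R) : R :=
  \sum_(o : O) p o * log2 (p o)^-1.

(* leaf labels of the complete binary trie of height h, left to right *)
Definition leaves {O : finType} {h : nat} (f : {ffun 'I_(2 ^ h) -> O}) : seq O :=
  [seq f i | i <- enum 'I_(2 ^ h)].

(* leaf-label string of the b-th level-j subtrie (2^j consecutive leaves) *)
Definition block {O : finType} {h : nat} (f : {ffun 'I_(2 ^ h) -> O}) (j b : nat)
  : seq O := take (2 ^ j) (drop (b * 2 ^ j) (leaves f)).

(* |V^j_D| : number of nodes of the folded DAG D at level j = number of
   distinct leaf-label strings among the 2^(h-j) level-j subtries *)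
Definition nodes_at_level {O : finType} {h : nat} (f : {ffun 'I_(2 ^ h) -> O})
  (j : nat) : nat :=
  size (undup [seq block f j b | b <- iota 0 (2 ^ (h - j))]).

Definition prob_lab {R : realType} {O : finType} {h : nat} (p : O -> R)
  (f : {ffun 'I_(2 ^ h) -> O}) : R := \prod_(i : 'I_(2 ^ h)) p (f i).

Definition exp_nodes {R : realType} {O : finType} (h : nat) (p : O -> R) (j : nat)
  : R := \sum_(f : {ffun 'I_(2 ^ h) -> O}) prob_lab p f * (nodes_at_level f j)%:R.

Definition beta {R : realType} {O : finType} (h : nat) (p : O -> R) (j : nat) : R :=
  if j == h then Num.min (2 ^+ (h - j)) ((#|O| ^ (2 ^ j))%:R)
  else Num.min (entropy p / (h - j)%:R * 2 ^+ h + 3)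
               (Num.min (2 ^+ (h - j)) ((#|O| ^ (2 ^ j))%:R)).

From HB Require Import structures.
From mathcomp Require Import all_boot all_order all_algebra.
From mathcomp Require Import all_classical all_reals.
From mathcomp Require Import sequences exp.
From mathcomp Require Import ring lra zify.
Set Implicit Arguments.
Unset Strict Implicit.
Unset Printing Implicit Defensive.

Import Order.TTheory GRing.Theory Num.Theory.
Local Open Scope ring_scope.

(** Fix a level j < h and put L = h - j.  The expected number of distinct
    level-j subtries is at most the sum, over all words t of length 2^j, of the
    probability a(t) that t occurs among the 2^L blocks of leaves, and
    a(t) <= min(1, 2^L q(t)) by the union bound, q(t) being the probability of
    the word t.  For q(t) <= 1/4 an elementary estimate gives
    L a(t) <= 2^L q(t) log2 (1/q(t)), at most three words have q(t) > 1/4, and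
    the entropy of the block distribution is 2^j H_O; hence
    E|V^j| <= H_O 2^h / L + 3.  With the trivial bounds 2^L and delta^(2^j)
    this gives E|V^j| <= beta_j <= beta_{k*} for every level, and summing over
    the h levels yields the claim. *)

Section Logarithm.
Variable R : realType.

Lemma ln_prod (I : finType) (F : I -> R) :
  (forall i, 0 < F i) -> ln (\prod_i F i) = \sum_i ln (F i).
Proof.
move=> F_gt0.
suff [] : 0 < \prod_i F i /\ ln (\prod_i F i) = \sum_i ln (F i) by [].
apply: (big_rec2 (fun y1 y2 => 0 < y1 /\ ln y1 = y2)); first by rewrite ln1.
move=> i y1 y2 _ [y1_gt0 <-]; split; first by rewrite mulr_gt0.
by rewrite lnM ?posrE.
Qed.

Lemma ln_le_subr1 (x : R) : 0 < x -> ln x <= x - 1.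
Proof.
move=> x_gt0; have := @le_ln1Dx R (x - 1).
by rewrite addrCA subrr addr0; apply; lra.
Qed.

Lemma ln2_ge_half : 1 / 2 <= ln (2 : R).
Proof.
have e_half : expR (1 / 2 : R) <= 2.
  have := expR_ge1Dx (- (1 / 2) : R); have := expRxMexpNx_1 (1 / 2 : R).
  have := expR_gt0 (- (1 / 2) : R); nra.
by rewrite -ler_ln ?posrE ?expR_gt0 // expRK in e_half.
Qed.

Lemma xlog2_inv_ge0 (x : R) : 0 <= x -> x <= 1 -> 0 <= x * log2 x^-1.
Proof.
move=> x_ge0 x_le1; have [->|x_neq0] := eqVneq x 0; first by rewrite mul0r.
have x_gt0 : 0 < x by rewrite lt_def x_neq0.
rewrite mulr_ge0 // /log2 divr_ge0 ?ln_ge0 //; last lra.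
by rewrite invf_ge1.
Qed.

(* If 2^L q <= 1 then log2 (1/q) >= L; otherwise r := 2^L q lies in (1, 2^L/4],
   where r (L - log2 r) >= L. *)
Lemma min_scaled_le_xlog2 (L : nat) (q a : R) :
  0 <= q -> q <= 1 / 4 -> 0 <= a -> a <= 1 -> a <= 2 ^+ L * q ->
  L%:R * a <= 2 ^+ L * (q * log2 q^-1).
Proof.
move=> q_ge0 q_le a_ge0 a_le1 a_le.
set m : R := 2 ^+ L in a_le *.
have m_gt0 : 0 < m by rewrite exprn_gt0.
have ln2_gt0 : 0 < ln (2 : R) by have := ln2_ge_half; lra.
have ln_m : ln m = L%:R * ln 2 by rewrite lnXn // mulr_natl.
have L_ge0 : 0 <= L%:R :> R := ler0n _ _.
have [q0|q_neq0] := eqVneq q 0.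
  have -> : a = 0 by apply/eqP; rewrite eq_le a_ge0 andbT; move: a_le; rewrite q0 mulr0.
  by rewrite q0 !(mulr0, mul0r).
have q_gt0 : 0 < q by rewrite lt_def q_neq0.
rewrite /log2 -(ler_pM2r ln2_gt0) !mulrA divfK ?gt_eqF // -!mulrA.
have [mq_le1|mq_gt1] := leP (m * q) 1.
  have : ln m <= ln q^-1.
    by rewrite ler_ln ?posrE ?invr_gt0 // -(ler_pM2r q_gt0) mulVf.
  rewrite ln_m => lnq.
  have : L%:R * ln 2 * a <= L%:R * ln 2 * (m * q).
    by apply: ler_wpM2l => //; apply: mulr_ge0; lra.
  have : m * q * (L%:R * ln 2) <= m * q * ln q^-1.
    by apply: ler_wpM2l => //; apply: mulr_ge0; lra.
  nra.
set r := m * q in mq_gt1 *.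
have r_gt0 : 0 < r by lra.
have ln_q : ln q^-1 = ln m - ln r.
  by rewrite -ln_div ?posrE // /r invfM mulrA mulfV ?gt_eqF ?mul1r.
have ln4 : ln (4 : R) = 2 * ln 2.
  by rewrite (_ : 4 = 2 ^+ 2) ?lnXn ?mulr_natl //; lra.
have ln_4r : ln 4 + ln r <= ln m.
  by rewrite -lnM ?posrE ?ler_ln ?posrE // ?mulr_gt0 // /r; nra.
have gain : ln m <= r * (ln m - ln r).
  have : (r - 1) * (ln 4 + ln r) <= (r - 1) * ln m by apply: ler_wpM2l; lra.
  have := ln_le_subr1 r_gt0; have := ln2_ge_half; nra.
have ln_m_ge0 : 0 <= ln m by rewrite ln_m mulr_ge0 // ltW.
have -> : L%:R * (a * ln 2) = ln m * a by rewrite ln_m; ring.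
rewrite mulrA -/r ln_q; nra.
Qed.

End Logarithm.

Lemma codom_ffun_inj (aT : finType) (rT : eqType) :
  injective (fun t : {ffun aT -> rT} => codom t).
Proof. by move=> t u; rewrite /= !codom_ffun => /val_inj/(can_inj fgraphK). Qed.

Lemma prod_nat_forall (R : comPzSemiRingType) (I : finType) (P : pred I) :
  \prod_(i : I) ((P i)%:R : R) = [forall i, P i]%:R.
Proof.
have [allP | /forallPn[i Pi]] := boolP [forall i, P i].
  by apply: big1 => i _; rewrite (forallP allP).
by rewrite (bigD1 i) //= (negbTE Pi) mul0r.
Qed.

Section WordProbability.
Variables (R : realType) (O : finType) (p : O -> R).
Hypotheses (p_ge0 : forall o, 0 <= p o) (p_sum1 : \sum_o p o = 1).

(* [prob_lab p] of the trie is the instance [n = 2 ^ h]. *)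
Definition word_prob {n : nat} (t : {ffun 'I_n -> O}) : R := \prod_i p (t i).

Lemma word_prob_ge0 n (t : {ffun 'I_n -> O}) : 0 <= word_prob t.
Proof. exact: prodr_ge0. Qed.

Lemma sum_ffun_prod n (G : 'I_n -> O -> R) :
  \sum_(t : {ffun 'I_n -> O}) \prod_i (p (t i) * G i (t i))
  = \prod_i \sum_o p o * G i o.
Proof. by rewrite (bigA_distr_bigA (fun i o => p o * G i o)). Qed.

Lemma sum_word_prob n : \sum_(t : {ffun 'I_n -> O}) word_prob t = 1.
Proof.
transitivity (\sum_(t : {ffun 'I_n -> O}) \prod_i (p (t i) * (fun _ _ => 1) i (t i))).
  by apply: eq_bigr => t _; apply: eq_bigr => i _; rewrite mulr1.
rewrite (@sum_ffun_prod n (fun _ _ => 1)) big1 // => i _.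
by under eq_bigr do rewrite mulr1.
Qed.

Lemma word_prob_le1 n (t : {ffun 'I_n -> O}) : word_prob t <= 1.
Proof.
rewrite -(sum_word_prob n) (bigD1 t) //= lerDl.
by apply: sumr_ge0 => u _; apply: word_prob_ge0.
Qed.

Lemma sum_word_prob_letter n (k : 'I_n) (g : O -> R) :
  \sum_(t : {ffun 'I_n -> O}) word_prob t * g (t k) = \sum_o p o * g o.
Proof.
pose G i o := if i == k then g o else 1.
transitivity (\sum_(t : {ffun 'I_n -> O}) \prod_i (p (t i) * G i (t i))).
  apply: eq_bigr => t _; rewrite big_split /=; congr (_ * _).
  by rewrite (bigD1 k) //= /G eqxx big1 ?mulr1 // => i /negPf ->.
rewrite sum_ffun_prod (bigD1 k) //= [X in _ * X]big1 ?mulr1.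
  by apply: eq_bigr => o _; rewrite /G eqxx.
move=> i /negPf ik; rewrite -[RHS]p_sum1.
by apply: eq_bigr => o _; rewrite /G ik mulr1.
Qed.

Lemma sum_word_prob_window n N (pos : 'I_n -> 'I_N) (u : {ffun 'I_n -> O}) :
  injective pos ->
  \sum_(t : {ffun 'I_N -> O}) word_prob t * ([ffun k => t (pos k)] == u)%:R
  = word_prob u.
Proof.
move=> pos_inj.
(* [G i] constrains coordinate [i] only if it lies in the window, so the
   indicator factors over coordinates. *)
pose G i o : R := [forall k, (pos k == i) ==> (o == u k)]%:R.
transitivity (\sum_(t : {ffun 'I_N -> O}) \prod_i (p (t i) * G i (t i))).
  apply: eq_bigr => t _; rewrite big_split /= prod_nat_forall.
  congr (_ * (nat_of_bool _)%:R).
  apply/idP/idP => [/eqP <- | /forallP tu].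
    by apply/forallP => i; apply/forallP => k; apply/implyP => /eqP <-; rewrite ffunE.
  apply/eqP/ffunP => k; rewrite ffunE; apply/eqP.
  exact: (implyP (forallP (tu (pos k)) k) (eqxx _)).
rewrite sum_ffun_prod (bigID (mem (codom pos))) /= [X in _ * X]big1 ?mulr1.
  rewrite -big_uniq /=; last by rewrite codomE (map_inj_uniq pos_inj) enum_uniq.
  rewrite /codom big_image /word_prob; apply: eq_bigr => k _.
  rewrite (bigD1 (u k)) //= big1 ?addr0 /G.
    suff -> : [forall k', (pos k' == pos k) ==> (u k == u k')] by rewrite mulr1.
    by apply/forallP => k'; apply/implyP => /eqP/pos_inj ->.
  move=> o ouk; apply/eqP; rewrite mulf_eq0 pnatr_eq0 eqb0; apply/orP; right.
  by apply/forallPn; exists k; rewrite eqxx.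
move=> i nopos; rewrite -[RHS]p_sum1; apply: eq_bigr => o _; rewrite /G.
suff -> : [forall k, (pos k == i) ==> (o == u k)] by rewrite mulr1.
apply/forallP => k; apply/implyP => /eqP posk.
by move: nopos; rewrite -posk codom_f.
Qed.

Lemma word_prob_log2 n (t : {ffun 'I_n -> O}) :
  word_prob t * log2 (word_prob t)^-1 = \sum_k word_prob t * log2 (p (t k))^-1.
Proof.
have [->|t_neq0] := eqVneq (word_prob t) 0.
  by rewrite mul0r big1 // => k _; rewrite mul0r.
have p_gt0 k : 0 < p (t k).
  rewrite lt_def p_ge0 andbT; apply: contraNneq t_neq0 => ptk0.
  by rewrite /word_prob (bigD1 k) //= ptk0 mul0r.
rewrite -mulr_sumr /log2 -mulr_suml lnV ?posrE ?prodr_gt0 //.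
by rewrite ln_prod // -sumrN; congr (_ * (_ * _)); apply: eq_bigr => k _; rewrite lnV ?posrE.
Qed.

Lemma sum_word_entropy n :
  \sum_(t : {ffun 'I_n -> O}) word_prob t * log2 (word_prob t)^-1 = n%:R * entropy p.
Proof.
under eq_bigr do rewrite word_prob_log2.
rewrite exchange_big /=.
under eq_bigr do rewrite (sum_word_prob_letter _ (fun o => log2 (p o)^-1)).
by rewrite sumr_const card_ord mulr_natl.
Qed.

Lemma card_likely_words n :
  (#|[pred t : {ffun 'I_n -> O} | (1 / 4 < word_prob t)%R]| <= 3)%N.
Proof.
set A := [pred t | _]; rewrite leqNgt; apply/negP => A_ge4.
have : #|A|%:R / 4 < \sum_(t in A) word_prob t :> R.
  have [t At] : exists t, t \in A by apply/card_gt0P; apply: leq_trans A_ge4.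
  rewrite -sum1_card natr_sum mulr_suml ltr_sum //.
  by apply/hasP; exists t; rewrite ?mem_index_enum.
have : \sum_(t in A) word_prob t <= 1.
  rewrite -(sum_word_prob n) [X in _ <= X](bigID (mem A)) /= lerDl.
  by apply: sumr_ge0 => t _; apply: word_prob_ge0.
have : 4 <= #|A|%:R :> R by rewrite ler_nat.
lra.
Qed.

End WordProbability.

Section Blocks.
Variables (O : finType) (h : nat) (f : {ffun 'I_(2 ^ h) -> O}).

Definition level_blocks j := [seq block f j b | b <- iota 0 (2 ^ (h - j))].

Section Block.
Variables (j b : nat).
Hypotheses (j_le_h : (j <= h)%N) (b_lt : (b < 2 ^ (h - j))%N).

Lemma block_end : (b * 2 ^ j + 2 ^ j <= 2 ^ h)%N.
Proof. by rewrite -mulSnr -(subnK j_le_h) expnD leq_mul2r b_lt orbT. Qed.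

Lemma block_pos_subproof (k : 'I_(2 ^ j)) : (b * 2 ^ j + k < 2 ^ h)%N.
Proof. by apply: leq_trans block_end; rewrite ltn_add2l. Qed.

Definition block_pos (k : 'I_(2 ^ j)) : 'I_(2 ^ h) := Ordinal (block_pos_subproof k).

Lemma block_pos_inj : injective block_pos.
Proof. by move=> k k' /(congr1 val)/addnI/val_inj. Qed.

Lemma block_codom : block f j b = codom [ffun k => f (block_pos k)].
Proof.
have -> : codom [ffun k => f (block_pos k)] = map f (map block_pos (enum 'I_(2 ^ j))).
  by rewrite codomE -[RHS]map_comp; apply: eq_map => k; rewrite /= ffunE.
rewrite /block /leaves -map_drop -map_take; congr (map f _).
apply: (inj_map val_inj); rewrite map_take map_drop val_enum_ord -map_comp.
rewrite drop_iota take_iota add0n (_ : minn _ _ = (2 ^ j)%N).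
  by rewrite /comp /= -[in LHS](addn0 (b * 2 ^ j)%N) iotaDl -val_enum_ord -map_comp.
by apply/minn_idPl; have := block_end; lia.
Qed.
End Block.

Lemma nodes_at_level_le_card j : (j <= h)%N ->
  (nodes_at_level f j
     <= #|[pred t : {ffun 'I_(2 ^ j) -> O} | codom t \in level_blocks j]|)%N.
Proof.
move=> j_le_h; rewrite /nodes_at_level cardE.
rewrite -(size_map (fun t : {ffun 'I_(2 ^ j) -> O} => codom t)).
apply: uniq_leq_size (undup_uniq _) _ => x; rewrite mem_undup => /mapP[b].
rewrite mem_iota add0n => /andP[_ b_lt] ->.
rewrite (block_codom j_le_h b_lt); apply: map_f.
by rewrite mem_enum inE -(block_codom j_le_h b_lt) map_f // mem_iota add0n.
Qed.

Lemma nodes_at_level_le_subtries j : (nodes_at_level f j <= 2 ^ (h - j))%N.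
Proof. by apply: leq_trans (size_undup _) _; rewrite size_map size_iota. Qed.

Lemma nodes_at_level_le_words j : (j <= h)%N -> (nodes_at_level f j <= #|O| ^ 2 ^ j)%N.
Proof.
move=> j_le_h; apply: leq_trans (nodes_at_level_le_card j_le_h) _.
by apply: leq_trans (max_card _) _; rewrite card_ffun card_ord.
Qed.
End Blocks.

Section ExpectedNodes.
Variables (R : realType) (O : finType) (p : O -> R) (h j : nat).
Hypotheses (p_ge0 : forall o, 0 <= p o) (p_sum1 : \sum_o p o = 1).
Hypothesis j_le_h : (j <= h)%N.

Definition occurrence_prob (t : {ffun 'I_(2 ^ j) -> O}) : R :=
  \sum_(f : {ffun 'I_(2 ^ h) -> O}) word_prob p f * (codom t \in level_blocks f j)%:R.

Lemma exp_nodes_le_sum_occurrence :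
  exp_nodes h p j <= \sum_(t : {ffun 'I_(2 ^ j) -> O}) occurrence_prob t.
Proof.
rewrite /exp_nodes /occurrence_prob exchange_big /=; apply: ler_sum => f _.
rewrite -mulr_sumr ler_wpM2l ?word_prob_ge0 //.
rewrite -natr_sum ler_nat -big_mkcond /= sum1_card.
exact: nodes_at_level_le_card.
Qed.

Lemma occurrence_prob_ge0 t : 0 <= occurrence_prob t.
Proof. by apply: sumr_ge0 => f _; rewrite mulr_ge0 ?word_prob_ge0. Qed.

Lemma occurrence_prob_le1 t : occurrence_prob t <= 1.
Proof.
rewrite -(sum_word_prob p_sum1 (2 ^ h)); apply: ler_sum => f _.
by rewrite ler_piMr ?word_prob_ge0 // lern1 leq_b1.
Qed.

Lemma occurrence_prob_le_union t :
  occurrence_prob t <= (2 ^ (h - j))%:R * word_prob p t.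
Proof.
have mem_le_count (s : seq (seq O)) : ((codom t \in s) <= count_mem (codom t) s)%N.
  by rewrite -has_pred1 has_count; case: (count _ _).
apply: (@le_trans _ _ (\sum_(b <- iota 0 (2 ^ (h - j)))
    \sum_(f : {ffun 'I_(2 ^ h) -> O}) word_prob p f * (block f j b == codom t)%:R)).
  rewrite /occurrence_prob exchange_big /=; apply: ler_sum => f _.
  rewrite -mulr_sumr ler_wpM2l ?word_prob_ge0 // -natr_sum ler_nat -big_mkcond /=.
  by rewrite sum1_count; apply: leq_trans (mem_le_count _) _; rewrite count_map.
rewrite (_ : iota 0 _ = index_iota 0 (2 ^ (h - j))); last by rewrite /index_iota subn0.
rewrite (eq_big_nat _ _ (F2 := fun=> word_prob p t)) => [|b /andP[_ b_lt]].
  by rewrite sumr_const_nat subn0 mulr_natl.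
under eq_bigr do rewrite (block_codom _ j_le_h b_lt) (inj_eq (@codom_ffun_inj _ _)).
exact/(sum_word_prob_window p_sum1)/block_pos_inj.
Qed.

Lemma exp_nodes_le_entropy : (j < h)%N ->
  exp_nodes h p j <= entropy p / (h - j)%:R * 2 ^+ h + 3.
Proof.
move=> j_lt_h; set L := (h - j)%N.
have L_gt0 : 0 < L%:R :> R by rewrite ltr0n subn_gt0.
set A := [pred t : {ffun 'I_(2 ^ j) -> O} | (1 / 4 < word_prob p t)%R].
have unlikely : \sum_(t | t \notin A) L%:R * occurrence_prob t <= 2 ^+ h * entropy p.
  apply: (@le_trans _ _ (\sum_(t | t \notin A)
      2 ^+ L * (word_prob p t * log2 (word_prob p t)^-1))).
    apply: ler_sum => t; rewrite inE -leNgt => t_unlikely.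
    apply: min_scaled_le_xlog2; rewrite ?word_prob_ge0 ?occurrence_prob_ge0 //.
      exact: occurrence_prob_le1.
    by rewrite -natrX; apply: occurrence_prob_le_union.
  apply: (@le_trans _ _ (\sum_(t : {ffun 'I_(2 ^ j) -> O})
      2 ^+ L * (word_prob p t * log2 (word_prob p t)^-1))).
    rewrite [leRHS](bigID (mem A)) /= lerDr; apply: sumr_ge0 => t _.
    by rewrite mulr_ge0 ?exprn_ge0 ?xlog2_inv_ge0 ?word_prob_ge0 ?word_prob_le1.
  by rewrite -mulr_sumr sum_word_entropy // mulrA natrX -exprD subnK // ltnW.
have likely : \sum_(t in A) L%:R * occurrence_prob t <= 3 * L%:R.
  apply: (@le_trans _ _ (\sum_(t in A) L%:R)).
    by apply: ler_sum => t _; apply: ler_piMr; [exact: ler0n | exact: occurrence_prob_le1].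
  by rewrite sumr_const -[_ *+ #|A|]mulr_natr mulrC ler_wpM2r ?ler0n // ler_nat card_likely_words.
rewrite -(ler_pM2l L_gt0); apply: le_trans (ler_wpM2l (ltW L_gt0) exp_nodes_le_sum_occurrence) _.
rewrite mulr_sumr (bigID (mem A)) /=.
have -> : L%:R * (entropy p / L%:R * 2 ^+ h + 3) = 3 * L%:R + 2 ^+ h * entropy p.
  by field; rewrite gt_eqF.
exact: lerD.
Qed.

Lemma exp_nodes_le_const (c : nat) :
  (forall f : {ffun 'I_(2 ^ h) -> O}, nodes_at_level f j <= c)%N ->
  exp_nodes h p j <= c%:R.
Proof.
move=> le_c; apply: (@le_trans _ _ (\sum_(f : {ffun 'I_(2 ^ h) -> O}) word_prob p f * c%:R)).
  by apply: ler_sum => f _; rewrite ler_wpM2l ?word_prob_ge0 ?ler_nat.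
by rewrite -mulr_suml sum_word_prob // mul1r.
Qed.

Lemma exp_nodes_le_beta : exp_nodes h p j <= beta h p j.
Proof.
have le_subtries : exp_nodes h p j <= 2 ^+ (h - j).
  by rewrite -natrX; apply: exp_nodes_le_const => f; apply: nodes_at_level_le_subtries.
have le_words : exp_nodes h p j <= (#|O| ^ 2 ^ j)%:R.
  by apply: exp_nodes_le_const => f; apply: nodes_at_level_le_words.
rewrite /beta; case: eqP => [_|/eqP j_neq_h]; rewrite !le_min le_subtries le_words //.
by rewrite exp_nodes_le_entropy // ltn_neqAle j_neq_h.
Qed.

End ExpectedNodes.

Lemma entropy_ge0 (R : realType) (O : finType) (p : O -> R) :
  (forall o, 0 <= p o) -> \sum_o p o = 1 -> 0 <= entropy p.
Proof.
move=> p_ge0 p_sum1; apply: sumr_ge0 => o _; apply: xlog2_inv_ge0 => //.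
by rewrite -p_sum1 (bigD1 o) //= lerDl sumr_ge0.
Qed.

Theorem theorem1 (R : realType) (O : finType) (p : O -> R) (h kstar : nat) :
  (2 <= h)%N ->
  (forall o, 0 <= p o) -> \sum_(o : O) p o = 1 ->
  (1 <= kstar <= h)%N ->
  (forall j : nat, (1 <= j <= h)%N -> beta h p j <= beta h p kstar) ->
  (2 * (h - kstar))%:R * \sum_(1 <= j < h.+1) exp_nodes h p j
    <= 2 * h%:R * entropy p * 2 ^+ h + 6 * (h ^ 2)%:R.
Proof.
move=> _ p_ge0 p_sum1 /andP[_ kstar_le_h] kstar_max.
have H_ge0 := entropy_ge0 p_ge0 p_sum1.
have [->|kstar_neq_h] := eqVneq kstar h.
  by rewrite subnn muln0 mul0r addr_ge0 ?mulr_ge0 ?exprn_ge0.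
set K := (h - kstar)%N; have K_gt0 : 0 < K%:R :> R.
  by rewrite ltr0n subn_gt0 ltn_neqAle kstar_neq_h.
set C := entropy p / K%:R * 2 ^+ h + 3.
have level_le_C j : (1 <= j <= h)%N -> exp_nodes h p j <= C.
  move=> j_range; apply: le_trans (exp_nodes_le_beta p_ge0 p_sum1 _) _.
    by case/andP: j_range.
  by apply: le_trans (kstar_max j j_range) _; rewrite /beta (negbTE kstar_neq_h) ge_min lexx.
have levels_le : \sum_(1 <= j < h.+1) exp_nodes h p j <= h%:R * C.
  apply: (@le_trans _ _ (\sum_(1 <= j < h.+1) C)).
    by apply: ler_sum_nat => j; apply: level_le_C.
  by rewrite sumr_const_nat subSS subn0 mulr_natl.
rewrite natrM; apply: le_trans (ler_wpM2l (mulr_ge0 (ler0n _ 2) (ltW K_gt0)) levels_le) _.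
have -> : 2%:R * K%:R * (h%:R * C) = 2 * h%:R * entropy p * 2 ^+ h + 6 * h%:R * K%:R.
  by rewrite /C; field; rewrite gt_eqF.
by rewrite lerD2l natrX expr2 -mulrA ler_pM2l // ler_wpM2l // ler_nat leq_subr.
Qed.
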